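(* Let $A$ with projections $\pi_B:A\to B$, $\pi_C:A\to C$ be a pullback in $\mathbf{Sets}$ of $f_1:B\to D$ and $g_1:C\to D$, where $g_1$ is injective. Then $\mathcal{PP}_a(A)$ with $\mathcal{PP}_a(\pi_B),\mathcal{PP}_a(\pi_C)$ is a pullback of $\mathcal{PP}_a(f_1)$ and $\mathcal{PP}_a(g_1)$ in $\mathbf{Sets}$.
   Context: For a set $M$ whose elements are treated as atoms (urelements, distinct from every set built below), let $S_0=M$, $S_{n+1}=S_n\cup\mathcal{P}(S_n)$, and $\mathcal{PP}_a(M)=\bigcup_{n\ge 0}S_n$. For $f:M\to N$, $\mathcal{PP}_a(f)$ is defined recursively by $\mathcal{PP}_a(f)(x)=f(x)$ for $x\in M$ and $\mathcal{PP}_a(f)(x)=\{\mathcal{PP}_a(f)(x')\mid x'\in x\}$ otherwise; this makes $\mathcal{PP}_a$ a functor $\mathbf{Sets}\to\mathbf{Sets}$. *)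

From Stdlib Require Import ClassicalEpsilon.

Set Implicit Arguments.

(* Level sets: pre M 0 = S_0 = M, pre M (n+1) = M + P(pre M n), which
   represents S_{n+1} = M ∪ P(S_n) (atoms disjoint from sets). *)
Fixpoint pre (M : Type) (n : nat) : Type :=
  match n with
  | O => M
  | S k => (M + (pre M k -> Prop))%type
  end.

(* Extensional equality between elements of possibly different levels. *)
Fixpoint eqv (M : Type) (n : nat) : forall m : nat, pre M n -> pre M m -> Prop :=
  match n return forall m : nat, pre M n -> pre M m -> Prop with
  | O => fun m =>
      match m return pre M O -> pre M m -> Prop with
      | O => fun x y => x = y
      | S m' => fun x y => match y with inl b => x = b | inr _ => False end
      end
  | S n' => fun m =>
      match m return pre M (S n') -> pre M m -> Prop with
      | O => fun x y => match x with inl a => a = y | inr _ => False end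
      | S m' => fun x y =>
          match x, y with
          | inl a, inl b => a = b
          | inr X, inr Y =>
              (forall u, X u -> exists v, Y v /\ eqv M n' m' u v) /\
              (forall v, Y v -> exists u, X u /\ eqv M n' m' u v)
          | _, _ => False
          end
      end
  end.

Definition Raw (M : Type) : Type := {n : nat & pre M n}.

Definition req (M : Type) (x y : Raw M) : Prop :=
  eqv M (projT1 x) (projT1 y) (projT2 x) (projT2 y).

Fixpoint pmap (M N : Type) (f : M -> N) (n : nat) : pre M n -> pre N n :=
  match n return pre M n -> pre N n with
  | O => f
  | S k => fun x =>
      match x with
      | inl a => inl (f a)
      | inr X => inr (fun y => exists x', X x' /\ y = pmap f k x')
      end
  end.

Definition rawmap (M N : Type) (f : M -> N) (x : Raw M) : Raw N :=
  existT _ (projT1 x) (pmap f (projT1 x) (projT2 x)).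

(* PP_a(M) as a genuine type: equivalence classes of raw elements. *)
Definition PPa (M : Type) : Type := {P : Raw M -> Prop | exists x, P = req x}.

Definition cls (M : Type) (x : Raw M) : PPa M :=
  exist _ (req x) (ex_intro _ x eq_refl).

Definition rep (M : Type) (X : PPa M) : Raw M :=
  proj1_sig (constructive_indefinite_description _ (proj2_sig X)).

Definition PPa_map (M N : Type) (f : M -> N) (X : PPa M) : PPa N :=
  cls (rawmap f (rep X)).

Definition is_pullback (A B C D : Type) (pB : A -> B) (pC : A -> C)
  (f : B -> D) (g : C -> D) : Prop :=
  (forall a, f (pB a) = g (pC a)) /\
  (forall b c, f b = g c -> exists! a, pB a = b /\ pC a = c).

Definition injective (X Y : Type) (h : X -> Y) : Prop :=
  forall x y, h x = h y -> x = y.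

(** Like the covariant powerset functor, [PPa] preserves weak pullbacks:
    if [PPa f1 X = PPa g1 Y], the set of all elements of [A] whose
    projections are (extensionally) members of [X] and of [Y] is mapped onto
    [X] and [Y], by induction on the level.  Uniqueness of the mediating
    element comes from injectivity: the pullback of the injective [g1] has an
    injective projection [pB], and [PPa] preserves injectivity. *)

From Stdlib Require Import ClassicalEpsilon FunctionalExtensionality PropExtensionality ProofIrrelevance.

Lemma eqv_refl {M : Type} n (x : pre M n) : eqv M n n x x.
Proof.
  induction n as [|n IH]; simpl; auto.
  destruct x as [a|X]; auto.
  split; intros u Hu; exists u; auto.
Qed.

Lemma eqv_sym {M : Type} n : forall m (x : pre M n) (y : pre M m),
  eqv M n m x y -> eqv M m n y x.
Proof.
  induction n as [|n IH]; intros [|m] x y H; simpl in *.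
  - auto.
  - destruct y; auto.
  - destruct x; auto.
  - destruct x as [a|X], y as [b|Y]; auto.
    destruct H as [H1 H2]; split.
    + intros v Hv; destruct (H2 v Hv) as [u [Hu E]]; exists u; auto.
    + intros u Hu; destruct (H1 u Hu) as [v [Hv E]]; exists v; auto.
Qed.

Lemma eqv_trans {M : Type} n : forall m p (x : pre M n) (y : pre M m) (z : pre M p),
  eqv M n m x y -> eqv M m p y z -> eqv M n p x z.
Proof.
  induction n as [|n IH]; intros [|m] [|p] x y z H1 H2; simpl in *;
  repeat match goal with
  | v : (_ + _)%type |- _ => destruct v
  end; subst; auto; try contradiction.
  destruct H1 as [A1 A2], H2 as [B1 B2]; split.
  - intros u Hu. destruct (A1 u Hu) as [v [Hv E]]. destruct (B1 v Hv) as [w [Hw E']].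
    exists w; split; eauto.
  - intros w Hw. destruct (B2 w Hw) as [v [Hv E]]. destruct (A2 v Hv) as [u [Hu E']].
    exists u; split; eauto.
Qed.

Lemma pmap_comp {M N P : Type} (f : N -> P) (g : M -> N) n (x : pre M n) :
  eqv P n n (pmap f n (pmap g n x)) (pmap (fun a => f (g a)) n x).
Proof.
  induction n as [|n IH]; simpl; auto.
  destruct x as [a|X]; simpl; auto.
  split.
  - intros u [x' [[x'' [Hx'' ->]] ->]].
    exists (pmap (fun a => f (g a)) n x''); split; eauto.
  - intros v [x'' [Hx'' ->]]. exists (pmap f n (pmap g n x'')); split; eauto.
Qed.

Lemma pmap_eqv {M N : Type} (f : M -> N) n : forall m (x : pre M n) (y : pre M m),
  eqv M n m x y -> eqv N n m (pmap f n x) (pmap f m y).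
Proof.
  induction n as [|n IH]; intros [|m] x y H; simpl in *;
  repeat match goal with
  | v : (_ + _)%type |- _ => destruct v
  end; subst; auto; try contradiction.
  destruct H as [H1 H2]; split.
  - intros u [x' [Hx' ->]]. destruct (H1 x' Hx') as [v [Hv E]].
    exists (pmap f m v); split; eauto.
  - intros v [y' [Hy' ->]]. destruct (H2 y' Hy') as [u [Hu E]].
    exists (pmap f n u); split; eauto.
Qed.

Lemma pmap_eqv_inj {M N : Type} (f : M -> N) (Hf : injective f) n :
  forall m (x : pre M n) (y : pre M m),
  eqv N n m (pmap f n x) (pmap f m y) -> eqv M n m x y.
Proof.
  induction n as [|n IH]; intros [|m] x y H; simpl in *;
  repeat match goal with
  | v : (_ + _)%type |- _ => destruct v
  end; simpl in *; auto; try contradiction;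
  try (apply Hf; assumption); try (inversion H; apply Hf; assumption).
  destruct H as [H1 H2]; split.
  - intros u Hu.
    destruct (H1 (pmap f n u) (ex_intro _ u (conj Hu eq_refl))) as [v [[v' [Hv' ->]] E]].
    exists v'; split; eauto.
  - intros v Hv.
    destruct (H2 (pmap f m v) (ex_intro _ v (conj Hv eq_refl))) as [u [[u' [Hu' ->]] E]].
    exists u'; split; eauto.
Qed.

Section WeakPullback.

Context {A B C D : Type} {pB : A -> B} {pC : A -> C} {f : B -> D} {g : C -> D}.
Hypothesis weak_pullback : forall b c, f b = g c -> exists a, pB a = b /\ pC a = c.

Lemma pmap_weak_pullback n : forall m (b : pre B n) (c : pre C m),
  eqv D n m (pmap f n b) (pmap g m c) ->
  exists a : pre A n, eqv B n n (pmap pB n a) b /\ eqv C n m (pmap pC n a) c.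
Proof.
  induction n as [|n IH]; intros [|m] b c H; simpl in *.
  - destruct (weak_pullback _ _ H) as [a [Ha1 Ha2]]. exists a; auto.
  - destruct c as [c|Y]; simpl in *; try contradiction.
    destruct (weak_pullback _ _ H) as [a [Ha1 Ha2]]. exists a; auto.
  - destruct b as [b|X]; simpl in *; try contradiction.
    destruct (weak_pullback _ _ H) as [a [Ha1 Ha2]]. exists (inl a); simpl; auto.
  - destruct b as [b|X], c as [c|Y]; simpl in *; try contradiction.
    + destruct (weak_pullback _ _ H) as [a [Ha1 Ha2]]. exists (inl a); simpl; auto.
    + destruct H as [H1 H2].
      exists (inr (fun u => exists x, X x /\ exists y, Y y /\
                 eqv B n n (pmap pB n u) x /\ eqv C n m (pmap pC n u) y)).
      simpl. split; split.
      * intros u' [u [[x [Hx [y [Hy [E1 E2]]]]] ->]]. exists x; auto.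
      * intros x Hx.
        destruct (H1 (pmap f n x) (ex_intro _ x (conj Hx eq_refl))) as [v [[y [Hy ->]] E]].
        destruct (IH _ _ _ E) as [u [Eu1 Eu2]].
        exists (pmap pB n u); split; auto.
        exists u; split; [|reflexivity]. exists x; split; [exact Hx|]. exists y; auto.
      * intros u' [u [[x [Hx [y [Hy [E1 E2]]]]] ->]]. exists y; auto.
      * intros y Hy.
        destruct (H2 (pmap g m y) (ex_intro _ y (conj Hy eq_refl))) as [v [[x [Hx ->]] E]].
        destruct (IH _ _ _ E) as [u [Eu1 Eu2]].
        exists (pmap pC n u); split; auto.
        exists u; split; [|reflexivity]. exists x; split; [exact Hx|]. exists y; auto.
Qed.

End WeakPullback.

Lemma cls_eq {M : Type} (x y : Raw M) : req x y -> cls x = cls y.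
Proof.
  intros H. unfold cls.
  assert (E : req x = req y).
  { apply functional_extensionality; intro z; apply propositional_extensionality.
    unfold req in *; split; intro Hz; eauto using eqv_trans, eqv_sym. }
  generalize (ex_intro (fun x0 : Raw M => req x = req x0) x eq_refl).
  generalize (ex_intro (fun x0 : Raw M => req y = req x0) y eq_refl).
  rewrite E. intros e1 e2. f_equal. apply proof_irrelevance.
Qed.

Lemma cls_inj {M : Type} {x y : Raw M} : cls x = cls y -> req x y.
Proof.
  intros H. apply (f_equal (@proj1_sig _ _)) in H. simpl in H.
  rewrite H. apply eqv_refl.
Qed.

Lemma cls_surj {M : Type} (X : PPa M) : exists x, X = cls x.
Proof.
  exists (rep X). destruct X as [P HP]. unfold rep. simpl.
  destruct (constructive_indefinite_description _ HP) as [r Hr]. simpl.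
  unfold cls. subst P. f_equal. apply proof_irrelevance.
Qed.

Lemma PPa_map_cls {M N : Type} (f : M -> N) (x : Raw M) :
  PPa_map f (cls x) = cls (rawmap f x).
Proof.
  unfold PPa_map. apply cls_eq.
  assert (H : req (rep (cls x)) x).
  { unfold rep. destruct (constructive_indefinite_description _ (proj2_sig (cls x))) as [r Hr].
    simpl in *. rewrite <- Hr. apply eqv_refl. }
  apply pmap_eqv. exact H.
Qed.

Lemma PPa_map_comp {M N P : Type} (f : N -> P) (g : M -> N) (X : PPa M) :
  PPa_map f (PPa_map g X) = PPa_map (fun a => f (g a)) X.
Proof.
  destruct (cls_surj X) as [[n x] ->].
  rewrite !PPa_map_cls. apply cls_eq. apply pmap_comp.
Qed.

Lemma PPa_map_inj {M N : Type} {f : M -> N} :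
  injective f -> injective (PPa_map f).
Proof.
  intros Hf X Y E.
  destruct (cls_surj X) as [[n x] ->]. destruct (cls_surj Y) as [[m y] ->].
  rewrite !PPa_map_cls in E. apply cls_eq.
  exact (pmap_eqv_inj f Hf n m x y (cls_inj E)).
Qed.

Lemma PPa_map_weak_pullback {A B C D : Type} {pB : A -> B} {pC : A -> C}
  {f : B -> D} {g : C -> D} :
  (forall b c, f b = g c -> exists a, pB a = b /\ pC a = c) ->
  forall X Y, PPa_map f X = PPa_map g Y ->
  exists Z, PPa_map pB Z = X /\ PPa_map pC Z = Y.
Proof.
  intros Hwp X Y E.
  destruct (cls_surj X) as [[n b] ->]. destruct (cls_surj Y) as [[m c] ->].
  rewrite !PPa_map_cls in E.
  destruct (pmap_weak_pullback Hwp n m b c (cls_inj E)) as [a [Ea1 Ea2]].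
  exists (cls (existT _ n a)). rewrite !PPa_map_cls.
  split; apply cls_eq; assumption.
Qed.

Lemma pullback_injective_proj {A B C D : Type} {pB : A -> B} {pC : A -> C}
  {f : B -> D} {g : C -> D} :
  is_pullback pB pC f g -> injective g -> injective pB.
Proof.
  intros [Hcom Hpb] Hg a1 a2 E.
  assert (E2 : pC a1 = pC a2) by (apply Hg; rewrite <- !Hcom, E; reflexivity).
  destruct (Hpb (pB a1) (pC a1) (Hcom a1)) as [a0 [_ Huniq]].
  rewrite <- (Huniq a1 (conj eq_refl eq_refl)). apply Huniq. split; auto.
Qed.

Theorem mainTheorem4 (A B C D : Type) (pB : A -> B) (pC : A -> C)
  (f1 : B -> D) (g1 : C -> D) :
  is_pullback pB pC f1 g1 -> injective g1 ->
  is_pullback (PPa_map pB) (PPa_map pC) (PPa_map f1) (PPa_map g1).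
Proof.
  intros Hpb Hg. pose proof Hpb as [Hcom Huniq]. split.
  - intro X. rewrite !PPa_map_comp. f_equal.
    apply functional_extensionality. exact Hcom.
  - intros X Y E.
    assert (Hwp : forall b c, f1 b = g1 c -> exists a, pB a = b /\ pC a = c).
    { intros b c Ebc. destruct (Huniq b c Ebc) as [a [Ha _]]. exists a; exact Ha. }
    destruct (PPa_map_weak_pullback Hwp X Y E) as [Z [HZB HZC]].
    exists Z. split; [split; assumption|].
    intros Z' [HZ'B _].
    apply (PPa_map_inj (pullback_injective_proj Hpb Hg)). congruence.
Qed.
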